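(* Let $P$ be a finite poset with unique minimal element $x_0$ and $Q$ a non-empty poset ideal of $P$. Then for any field $k$, $\tilde H^i(\Delta((P\uplus Q)\setminus\{x_0^\ast\});k)=0$ for all $i\in\mathbb{Z}$.
   Context: $\Delta(\cdot)$ denotes the order complex (simplicial complex of chains) and $\tilde H^i$ reduced simplicial cohomology. A poset ideal $Q$ of $P$ is a subset with $x\in Q$, $y<x$ implying $y\in Q$. The poset $P\uplus Q$ has underlying set $P\cup Q^\ast$, $Q^\ast=\{x^\ast:x\in Q\}$ a disjoint copy of $Q$, with $\alpha<\beta$ iff either $\alpha,\beta\in P$ and $\alpha<\beta$ in $P$; or $\alpha=x^\ast,\beta=y^\ast$ with $x<y$ in $P$; or $\alpha=x^\ast$ with $x\in Q$, $\beta\in P$ and $x\le\beta$ in $P$. *)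

From HB Require Import structures.
From mathcomp Require Import all_boot all_order all_algebra.
Set Implicit Arguments. Unset Strict Implicit. Unset Printing Implicit Defensive.
Import Order.TTheory GRing.Theory Num.Theory.

(* A (finite abstract) simplicial complex on a finite vertex type [V] is given
   by its predicate of faces [F : pred {set V}]; the empty face is included,
   so the cochain complex below is the augmented one (reduced cohomology).
   An i-face is a face with i+1 vertices (i : int, the empty face has
   dimension -1).  Orientations are induced by the total order [enum_rank]
   of [V]. *)
Section ReducedCohomology.
Variables (V : finType) (k : fieldType).
Local Open Scope ring_scope.

Definition vpos (v : V) (t : {set V}) : nat :=
  #|[set w in t | (enum_rank w < enum_rank v)%N]|.

Definition coboundary (c : {set V} -> k) (t : {set V}) : k :=
  \sum_(v in t) (-1) ^+ (vpos v t) * c (t :\ v).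

Definition cochain_of (F : pred {set V}) (i : int) (c : {set V} -> k) : Prop :=
  forall s, c s != 0 -> F s /\ (#|s|%:Z = i + 1).

Definition reduced_cohomology_vanishes (F : pred {set V}) (i : int) : Prop :=
  forall c, cochain_of F i c ->
    (forall t, F t -> #|t|%:Z = i + 2 -> coboundary c t = 0) ->
    exists2 b, cochain_of F (i - 1) b &
      forall s, F s -> #|s|%:Z = i + 1 -> coboundary b s = c s.
End ReducedCohomology.

Definition order_complex (V : finType) (W : {set V}) (lt : rel V) : pred {set V} :=
  fun s => (s \subset W) &&
    [forall u in s, forall v in s, (u != v) ==> (lt u v || lt v u)].

(* Underlying set P ∪ Q^*, encoded in P + P: [inl x] is x ∈ P, [inr x] is x^*
   (only for x ∈ Q). *)
Section Uplus.
Variables (d : Order.disp_t) (P : finPOrderType d) (Q : {set P}).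
Local Open Scope order_scope.

Definition uplus_lt (a b : P + P) : bool :=
  match a, b with
  | inl x, inl y => x < y
  | inr x, inr y => x < y
  | inr x, inl y => x <= y
  | inl _, inr _ => false
  end.

Definition uplus_carrier : {set P + P} :=
  [set a | match a with inl _ => true | inr x => x \in Q end].

Definition minimal_elt (x : P) : Prop := forall y : P, ~ (y < x).
Definition poset_ideal (Q' : {set P}) : Prop :=
  forall x y : P, x \in Q' -> y < x -> y \in Q'.
End Uplus.

(* For a chain s of (P ⊎ Q) \ {x0*}, let m(s) be the largest x with x* in s
   (or x0 if there is none).  Then the unstarred vertex m(s) is comparable with
   every vertex of s, and deleting an unstarred vertex from s does not change
   m(s).  Hence, if an i-cocycle c vanishes on the chains with fewer than n
   starred vertices, the cochain h(c)(t) = ±c(m(t) ∪ t) satisfies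
   δh(c) = c on the i-chains with at most n starred vertices: the terms of
   δh(c) that do not cancel as for an honest cone delete a starred vertex.
   Replacing c by c - δh(c) and descending on n shows that c is a
   coboundary. *)

From mathcomp Require Import all_boot all_order all_algebra zify.
Set Implicit Arguments. Unset Strict Implicit. Unset Printing Implicit Defensive.
Import Order.TTheory GRing.Theory.

Section Coboundary.
Variables (V : finType) (k : fieldType).
Local Open Scope ring_scope.
Implicit Types (c : {set V} -> k) (s t : {set V}) (u v : V).

Lemma vposU1 u v t : u \notin t ->
  vpos v (u |: t) = (vpos v t + (enum_rank u < enum_rank v))%N.
Proof.
move=> ut; rewrite /vpos; pose p := fun w : V => (enum_rank w < enum_rank v)%N.
have -> : [set w in u |: t | p w] = if p u then u |: [set w in t | p w]
                                   else [set w in t | p w].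
  by apply/setP=> w; case: ifP => pu; rewrite !inE;
    case: eqVneq => [->|] //=; rewrite (negbTE ut) pu.
rewrite /p; case: ifP => _; last by rewrite addn0.
by rewrite cardsU1 !inE (negbTE ut) addnC.
Qed.

Lemma vposD1 u v t : u \in t ->
  vpos v t = (vpos v (t :\ u) + (enum_rank u < enum_rank v))%N.
Proof. by move=> ut; rewrite -{1}(setD1K ut) vposU1 // !inE eqxx. Qed.

Lemma coboundaryD c1 c2 t :
  coboundary (fun s => c1 s + c2 s) t = coboundary c1 t + coboundary c2 t.
Proof. by rewrite /coboundary -big_split; apply: eq_bigr => v _; rewrite mulrDr. Qed.

Lemma coboundaryB c1 c2 t :
  coboundary (fun s => c1 s - c2 s) t = coboundary c1 t - coboundary c2 t.
Proof. by rewrite /coboundary -sumrB; apply: eq_bigr => v _; rewrite mulrBr. Qed.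

Lemma coboundary0 t : coboundary (fun=> 0 : k) t = 0.
Proof. by rewrite /coboundary big1 // => v _; rewrite mulr0. Qed.

Lemma sign_opp_cancel m n (x : k) :
  odd m != odd n -> (-1) ^+ m * x + (-1) ^+ n * x = 0.
Proof.
rewrite -[(-1) ^+ m]signr_odd -[(-1) ^+ n]signr_odd.
by case: (odd m); case: (odd n); rewrite //= expr0 expr1 mulN1r mul1r ?subrr ?addNr.
Qed.

Lemma rank_ltNgt u v : u != v ->
  (enum_rank v < enum_rank u)%N = ~~ (enum_rank u < enum_rank v)%N.
Proof.
move=> uv; have /negbTE ruv : enum_rank u != enum_rank v :> nat.
  by apply: contra uv => /eqP/val_inj/enum_rank_inj ->.
by rewrite ltnNge leq_eqVlt ruv.
Qed.

Lemma coboundaryK c t : coboundary (coboundary c) t = 0.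
Proof.
rewrite /coboundary; under eq_bigr do rewrite big_distrr /=.
rewrite pair_big_dep /= (bigID (fun p : V * V => (enum_rank p.1 < enum_rank p.2)%N)) /=.
rewrite [X in _ + X](reindex_inj (h := fun p : V * V => (p.2, p.1))); last first.
  by move=> [a b] [a' b'] [-> ->].
rewrite [X in _ + X](eq_bigl (fun p : V * V =>
    (p.1 \in t) && (p.2 \in t :\ p.1) && (enum_rank p.1 < enum_rank p.2)%N)) /=;
  last first.
  move=> [a b] /=; rewrite !inE; case: (eqVneq a b) => [->|ab]; first by rewrite !andbF.
  by rewrite (rank_ltNgt ab) negbK; case: (a \in t); case: (b \in t).
rewrite -big_split /=; apply: big1 => -[a b] /= /andP[/andP[at1]].
rewrite !inE => /andP[ba bt] lab.
rewrite setDDl setUC -setDDl !mulrA -!exprD; apply: sign_opp_cancel.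
rewrite (vposD1 a bt) (vposD1 b at1) lab (leq_gtF (ltnW lab)) addn0 addn1 addSn.
by rewrite addnC oddS; case: odd.
Qed.

Definition cone v c t : k :=
  if v \in t then 0 else (-1) ^+ vpos v (v |: t) * c (v |: t).

Lemma coboundary_cone_in v c s : v \in s -> coboundary (cone v c) s = c s.
Proof.
move=> vs; rewrite /coboundary (bigD1 v) //= big1 ?addr0; last first.
  by move=> u /andP[us uv]; rewrite /cone !inE eq_sym uv vs mulr0.
rewrite /cone !inE eqxx /= setD1K // (vposD1 v vs) ltnn addn0.
by rewrite signrMK.
Qed.

Lemma coboundary_cone_notin v c s : v \notin s ->
  coboundary (cone v c) s + (-1) ^+ vpos v (v |: s) * coboundary c (v |: s) = c s.
Proof.
move=> vs; rewrite /coboundary [X in _ + _ * X](bigD1 v) ?setU11 //=.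
rewrite setU1K // mulrDr signrMK addrCA -[RHS]addr0; congr (_ + _).
rewrite big_distrr /= [X in _ + X](eq_bigl (mem s)); last first.
  by move=> u; rewrite !inE; case: eqVneq => [->|]; rewrite ?(negbTE vs) ?andbT.
rewrite -big_split /=; apply: big1 => u us.
have uv : u != v by apply: contraNneq vs => <-.
have vsu : v \notin s :\ u by rewrite !inE negb_and vs orbT.
have -> : (v |: s) :\ u = v |: (s :\ u).
  by apply/setP=> x; rewrite !inE; case: (eqVneq x u) => // ->; rewrite (negbTE uv).
rewrite /cone (negbTE vsu) !mulrA -!exprD; apply: sign_opp_cancel.
rewrite (vposU1 v vsu) (vposU1 v vs) (vposU1 u vs) ltnn !addn0 (vposD1 v us).
rewrite (rank_ltNgt uv) addnC.
by case: (enum_rank u < enum_rank v)%N; rewrite /= !oddD; case: odd; case: odd.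
Qed.
End Coboundary.

Section Cochains.
Variables (V : finType) (k : fieldType) (F : pred {set V}).
Local Open Scope ring_scope.
Implicit Types (b c h : {set V} -> k) (s t : {set V}) (i : int).
Hypothesis F_sub : forall s t, F s -> t \subset s -> F t.

Definition is_cocycle i c :=
  forall t, F t -> #|t|%:Z = i + 2 -> coboundary c t = 0.

Definition is_coboundary i c := exists2 b, cochain_of F (i - 1) b &
  forall s, F s -> #|s|%:Z = i + 1 -> coboundary b s = c s.

Definition restrict i c s : k := if F s && (#|s|%:Z == i + 1) then c s else 0.

Lemma restrict_cochain i c : cochain_of F i (restrict i c).
Proof. by move=> s; rewrite /restrict; case: ifP => [/andP[? /eqP]|]; rewrite ?eqxx. Qed.

Lemma coboundary_restrict i c t : F t -> #|t|%:Z = i + 2 ->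
  coboundary (restrict i c) t = coboundary c t.
Proof.
move=> Ft ti; apply: eq_bigr => u ut; rewrite /restrict (F_sub Ft (subD1set t u)) /=.
suff -> : #|t :\ u|%:Z == i + 1 by [].
by move: ti; rewrite (cardsD1 u t) ut; lia.
Qed.

Lemma cochain_ofD i (b1 b2 : {set V} -> k) : cochain_of F i b1 -> cochain_of F i b2 ->
  cochain_of F i (fun s => b1 s + b2 s).
Proof.
move=> cb1 cb2 s; case: (eqVneq (b1 s) 0) => [->|/cb1 //].
by rewrite add0r => /cb2.
Qed.

Lemma is_coboundary_restrictB i c h : cochain_of F (i - 1) h ->
  is_coboundary i (restrict i (fun s => c s - coboundary h s)) -> is_coboundary i c.
Proof.
move=> ch [b cb eb]; exists (fun s => h s + b s); first exact: cochain_ofD.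
by move=> s Fs si; rewrite coboundaryD eb // /restrict Fs si eqxx /= addrC subrK.
Qed.
End Cochains.

(* In the application, [A] is the set of starred vertices and [apex s] is the
   unstarred copy of the largest starred vertex of [s]. *)
Section ApexCone.
Variables (V : finType) (k : fieldType) (F : pred {set V}).
Variables (A : {set V}) (apex : {set V} -> V).
Local Open Scope ring_scope.
Implicit Types (c : {set V} -> k) (s t : {set V}) (u v : V) (i : int).
Hypothesis F_sub : forall s t, F s -> t \subset s -> F t.
Hypothesis F_apex : forall s, F s -> F (apex s |: s).
Hypothesis apex_notin : forall s, apex s \notin A.
Hypothesis apexD1 : forall s u, F s -> u \in s -> u \notin A -> apex (s :\ u) = apex s.

Local Notation weight s := #|s :&: A|.

Definition apex_cone c t := cone (apex t) c t.

Lemma weightU1 v t : v \notin A -> weight (v |: t) = weight t.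
Proof.
move=> vA; apply: eq_card => x; rewrite !inE.
by case: eqVneq => [->|] //=; rewrite (negbTE vA) andbF.
Qed.

Lemma weightD1 u t : u \in t -> u \in A -> (weight (t :\ u) < weight t)%N.
Proof. by move=> ut uA; rewrite setIDAC (cardsD1 u (t :&: A)) inE ut uA. Qed.

Lemma cone_vanishing_below n v c t : v \notin A ->
  (forall s, (weight s < n)%N -> c s = 0) -> (weight t < n)%N -> cone v c t = 0.
Proof. by move=> vA c0 tn; rewrite /cone c0 ?weightU1 ?mulr0 ?if_same. Qed.

Lemma apex_cone_cochain i c : cochain_of F i c -> cochain_of F (i - 1) (apex_cone c).
Proof.
move=> cc s; rewrite /apex_cone /cone; case: ifP => [_|vs]; first by rewrite eqxx.
rewrite mulf_eq0 negb_or => /andP[_ /cc[Fs si]]; split; first exact: F_sub Fs (subsetUr _ _).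
by move: si; rewrite cardsU1 vs; lia.
Qed.

Lemma coboundary_apex_cone i n c : is_cocycle F i c ->
    (forall s, (weight s < n)%N -> c s = 0) ->
  forall s, F s -> #|s|%:Z = i + 1 -> (weight s <= n)%N ->
  coboundary (apex_cone c) s = c s.
Proof.
move=> cyc c0 s Fs si sn.
have -> : coboundary (apex_cone c) s = coboundary (cone (apex s) c) s.
  apply: eq_bigr => u us; congr (_ * _); rewrite /apex_cone.
  have [uA|uA] := boolP (u \in A); last by rewrite apexD1.
  have lt := leq_trans (weightD1 us uA) sn.
  by rewrite !(cone_vanishing_below (apex_notin _) c0 lt).
have [vs|vs] := boolP (apex s \in s); first exact: coboundary_cone_in.
rewrite -(coboundary_cone_notin c vs) cyc ?mulr0 ?addr0 //; first exact: F_apex.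
by move: si; rewrite cardsU1 vs; lia.
Qed.

(* Descending induction on the weight below which [c] vanishes; for
   [m = #|A|.+1] the vanishing hypothesis is empty. *)
Lemma is_coboundary_vanishing_below m i c : cochain_of F i c -> is_cocycle F i c ->
  (forall s, (weight s < #|A|.+1 - m)%N -> c s = 0) -> is_coboundary F i c.
Proof.
elim: m c => [|m IH] c cc cyc c0.
  exists (fun=> 0); first by move=> s; rewrite eqxx.
  by move=> s _ _; rewrite coboundary0 c0 // subn0 ltnS subset_leq_card ?subsetIr.
apply: (is_coboundary_restrictB (apex_cone_cochain cc)); apply: IH.
- exact: restrict_cochain.
- move=> t Ft ti; rewrite coboundary_restrict // coboundaryB coboundaryK.
  by rewrite (cyc _ Ft ti) subr0.
- move=> s sn; rewrite /restrict; case: ifP => // /andP[Fs /eqP si].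
  by rewrite (coboundary_apex_cone cyc c0) ?subrr //; lia.
Qed.

Theorem apex_reduced_cohomology_vanishes i : reduced_cohomology_vanishes k F i.
Proof.
move=> c cc cyc; apply: (is_coboundary_vanishing_below (m := #|A|.+1)) => // s.
by rewrite subnn.
Qed.
End ApexCone.

Section OrderComplex.
Variables (V : finType) (W : {set V}) (lt : rel V).
Implicit Types (s t : {set V}) (u v : V).

Lemma order_complex_lt s u v : order_complex W lt s ->
  u \in s -> v \in s -> u != v -> lt u v || lt v u.
Proof.
by move=> /andP[_ /forall_inP cs] us vs; move/forall_inP: (cs u us) => /(_ v vs)/implyP.
Qed.

Lemma order_complex_sub s t :
  order_complex W lt s -> t \subset s -> order_complex W lt t.
Proof.
move=> Fs ts; have /andP[sW _] := Fs.
apply/andP; split; first exact: subset_trans sW.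
apply/forall_inP=> u ut; apply/forall_inP=> v vt; apply/implyP.
exact: order_complex_lt Fs (subsetP ts u ut) (subsetP ts v vt).
Qed.

Lemma order_complexU1 s v : order_complex W lt s -> v \in W ->
  (forall u, u \in s -> u != v -> lt u v || lt v u) -> order_complex W lt (v |: s).
Proof.
move=> Fs vW cmp; have /andP[sW _] := Fs.
apply/andP; split; first by rewrite subUset sub1set vW.
apply/forall_inP=> u /setU1P us; apply/forall_inP=> w /setU1P ws; apply/implyP=> uw.
case: us => [?|us]; case: ws => [?|ws]; subst.
- by rewrite eqxx in uw.
- by rewrite orbC cmp // eq_sym.
- exact: cmp.
- exact: order_complex_lt Fs us ws uw.
Qed.
End OrderComplex.

Section UplusCone.
Variables (d : Order.disp_t) (P : finPOrderType d).
Local Open Scope order_scope.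

Lemma unique_minimal_le (x0 : P) :
  (forall x, minimal_elt x <-> x = x0) -> forall y, x0 <= y.
Proof.
move=> hmin y.
have [z zy zmin] := @arg_minnP _ _ (<= y) (fun z => #|[set w | w < z]|) (lexx y).
suff <- : z = x0 by [].
apply/hmin => w wz; have := zmin w (le_trans (ltW wz) zy).
rewrite leqNgt => /negP; apply; apply: proper_card; apply/properP; split.
  by apply/subsetP=> u; rewrite !inE => /lt_trans; apply.
by exists w; rewrite !inE ?wz ?ltxx.
Qed.

Lemma chain_greatest (A : {set P}) a0 : a0 \in A ->
  {in A &, forall x y, x != y -> (x < y) || (y < x)} ->
  exists2 m, m \in A & {in A, forall x, x <= m}.
Proof.
move=> a0A ch; have [m mA mmax] := arg_maxnP (fun m => #|[set x in A | x <= m]|) a0A.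
exists m => // x xA; apply/negPn/negP => nxm.
have xm : x != m by apply: contraNneq nxm => ->.
have mx : m < x by move: (ch x m xA mA xm); rewrite (contraNF (@ltW _ _ _ _) nxm).
have := mmax x xA; rewrite /= leqNgt => /negP; apply; apply: proper_card.
apply/properP; split.
  by apply/subsetP=> w; rewrite !inE => /andP[-> /le_trans]; apply; apply: ltW.
by exists x; rewrite !inE ?xA ?lexx // (negbTE nxm).
Qed.

Variables (x0 : P) (Q : {set P}).
Hypothesis hmin : forall x, minimal_elt x <-> x = x0.
Local Notation F := (order_complex (uplus_carrier Q :\ inr x0) (@uplus_lt d P)).
Implicit Types (s : {set P + P}).

Definition stars s : {set P} := [set x | inr x \in s].

Definition top_star s : P :=
  odflt x0 [pick m in stars s | [forall x in stars s, x <= m]].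

Lemma top_starP s : F s ->
  (stars s = set0 /\ top_star s = x0) \/
  (inr (top_star s) \in s /\ forall x, inr x \in s -> x <= top_star s).
Proof.
move=> Fs; rewrite /top_star; case: pickP => [m /andP[ms /forall_inP mmax]|nomax].
  by right; split=> [|x xs]; [rewrite inE in ms | apply: mmax; rewrite inE].
left; split=> //; apply/eqP; apply/negPn/negP => /set0Pn[a0 a0s].
have ch : {in stars s &, forall x y, x != y -> (x < y) || (y < x)}.
  move=> x y; rewrite !inE => xs ys xy.
  by apply: order_complex_lt Fs xs ys _; apply: contra xy => /eqP[->].
have [m ms mmax] := chain_greatest a0s ch.
by move: (nomax m); rewrite ms => /negbT/forall_inPn[x /mmax ->].
Qed.

Lemma top_star_ub s x : F s -> inr x \in s -> x <= top_star s.
Proof.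
move=> Fs xs; case: (top_starP Fs) => [[s0 _]|[_ ub]]; last exact: ub.
by move/setP: s0 => /(_ x); rewrite !inE xs.
Qed.

Lemma top_star_lb s y : F s -> inl y \in s -> top_star s <= y.
Proof.
move=> Fs ys; case: (top_starP Fs) => [[_ ->]|[ms _]]; first exact: unique_minimal_le.
by have := order_complex_lt Fs ys ms isT.
Qed.

Lemma top_star_D1l s y : top_star (s :\ inl y) = top_star s.
Proof. by rewrite /top_star (_ : stars _ = stars s) //; apply/setP=> x; rewrite !inE. Qed.

Lemma order_complex_top_star s : F s -> F (inl (top_star s) |: s).
Proof.
move=> Fs; apply: order_complexU1 => // [|[y|x] us uv /=]; first by rewrite !inE.
  apply/orP; right; rewrite lt_def top_star_lb // andbT.
  by apply: contra uv => /eqP ->.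
by rewrite top_star_ub.
Qed.
End UplusCone.

Theorem lemma6p6 (d : Order.disp_t) (P : finPOrderType d) (x0 : P)
    (Q : {set P}) (k : fieldType) :
  (forall x : P, minimal_elt x <-> x = x0) ->
  poset_ideal Q ->
  Q != set0 ->
  forall i : int,
    reduced_cohomology_vanishes k
      (order_complex (uplus_carrier Q :\ inr x0) (@uplus_lt d P)) i.
Proof.
move=> hmin _ _ i.
apply: (apex_reduced_cohomology_vanishes (A := [set inr x | x : P])
          (apex := fun s => inl (top_star x0 s))).
- exact: order_complex_sub.
- exact: order_complex_top_star.
- by move=> s; apply/imsetP=> -[].
- by move=> s [y|x] _ _; rewrite ?top_star_D1l // imset_f.
Qed.
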